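(* Let $n\ge1$, $m\ge n$, and ${\sf A}_k(\mathbf u)$ as defined in the context. (i) For $\mathbf t=(t_0,\dots,t_m)$ put $h(\mathbf t;\mathbf u)=\sum_{k=0}^m t_k p_k(\mathbf u)$ and ${\sf H}(\mathbf t;\mathbf u)=\sum_{k=0}^m t_k{\sf A}_k(\mathbf u)$. Then ${\sf H}$ is upper triangular with $({\sf H})_{i,j}=\frac{\partial^{\,j-i}h}{\partial u_1^{\,j-i}}$ for $i\le j$, and the critical point equations $\frac{\partial\Phi}{\partial y_i}(\mathbf t;\mathbf u)=0$ ($i=1,\dots,n$) for $\Phi(\mathbf t;\mathbf y)=\sum_{k=0}^m t_kp_{k+1}(\mathbf y)$ hold if and only if ${\sf H}(\mathbf t;\mathbf u)=0$. (ii) For every $\mathbf u\in\mathbb C^n$, setting $t_i=(-1)^i e_{n-i}(\mathbf u)$ for $i=0,1,\dots,n$ and $t_k=0$ for $n<k\le m$ gives ${\sf H}(\mathbf t;\mathbf u)=0$, where $e_j(\mathbf u):=(-1)^j p_j(-\mathbf u)$.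
   Context: The elementary Schur polynomials $p_k(\mathbf u)$, $\mathbf u=(u_1,\dots,u_n)$, are defined by $\exp\big(\sum_{i=1}^n u_i z^i\big)=\sum_{k\ge 0}p_k(\mathbf u)z^k$, with $p_k=0$ for $k<0$. ${\sf A}_k(\mathbf u)$ is the $n\times n$ matrix with $({\sf A}_k)_{i,j}=p_{k-j+i}(\mathbf u)$ for $i\le j$ and $0$ for $i>j$. *)

From HB Require Import structures.
From mathcomp Require Import all_boot all_order all_algebra.
Set Implicit Arguments. Unset Strict Implicit. Unset Printing Implicit Defensive.
Import Order.TTheory GRing.Theory Num.Theory.
Local Open Scope ring_scope.

(* Elementary Schur polynomials, with coefficients u_1..u_n stored at indices
   0..n-1 and living in {poly R} (so that we can single out one variable).
   p_k(u) = coefficient of z^k in exp(sum_i u_i z^i)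
          = coefficient of z^k in sum_{j<=k} (sum_i u_i z^i)^j / j!
   (terms with j > k do not contribute to the z^k coefficient). *)
Definition schurP (R : numFieldType) (n k : nat) (u : 'I_n -> {poly R}) : {poly R} :=
  \sum_(j < k.+1)
     ((nat_of_ord j)`!%:R : R)^-1 *: ((\sum_(i < n) (u i)%:P * 'X^((nat_of_ord i).+1)) ^+ j)`_k.

Definition schur (R : numFieldType) (n k : nat) (u : 'I_n -> R) : R :=
  (schurP k (fun i => (u i)%:P)).[0].

Definition schurZ (R : numFieldType) (n : nat) (k : int) (u : 'I_n -> R) : R :=
  match k with Posz k' => schur k' u | Negz _ => 0 end.

Definition Amx (R : numFieldType) (n k : nat) (u : 'I_n -> R) : 'M[R]_n :=
  \matrix_(i, j) if (i <= j)%N then schurZ (k%:Z - (nat_of_ord j)%:Z + (nat_of_ord i)%:Z) u else 0.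

Definition Hmx (R : numFieldType) (n m : nat) (t : 'I_m.+1 -> R) (u : 'I_n -> R) : 'M[R]_n :=
  \sum_(k < m.+1) t k *: Amx k u.

Definition varpoly (R : numFieldType) (n : nat) (u : 'I_n -> R) (i : 'I_n) : 'I_n -> {poly R} :=
  fun j => if j == i then 'X else (u j)%:P.

(* h(t; u) as a polynomial in the variable u_i (other coordinates fixed to u) *)
Definition h_in (R : numFieldType) (n m : nat) (t : 'I_m.+1 -> R) (u : 'I_n -> R) (i : 'I_n)
  : {poly R} := \sum_(k < m.+1) t k *: schurP k (varpoly u i).

(* Phi(t; y) = sum_k t_k p_{k+1}(y), as a polynomial in y_i (others fixed to u) *)
Definition Phi_in (R : numFieldType) (n m : nat) (t : 'I_m.+1 -> R) (u : 'I_n -> R) (i : 'I_n)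
  : {poly R} := \sum_(k < m.+1) t k *: schurP k.+1 (varpoly u i).

Definition elem (R : numFieldType) (n j : nat) (u : 'I_n -> R) : R :=
  (-1) ^+ j * schur j (fun i => - u i).

From HB Require Import structures.
From mathcomp Require Import all_boot all_order all_algebra zify ring.
Import Order.TTheory GRing.Theory Num.Theory.
Set Implicit Arguments. Unset Strict Implicit. Unset Printing Implicit Defensive.
Local Open Scope ring_scope.

(* With W(z) = sum_i u_i z^i, p_k(u) is the z^k-coefficient of exp W. Differentiating
   in u_i multiplies exp W by z^i, so d p_k / d u_i = p_(k-i). Hence the r-th
   u_1-derivative of h is sum_k t_k p_(k-r), the entry of H on its r-th superdiagonal,
   and d Phi / d u_i = sum_k t_k p_(k+1-i) is the entry on the (i-1)-th one.
   For (ii), the entry of H on the d-th superdiagonal becomes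
   (-1)^n sum_b p_b(u) p_(n-d-b)(-u), the z^(n-d)-coefficient of exp(W) exp(-W) = 1.
   Exponentials are truncated to E_N(V) = sum_(j<N) V^j/j!; the needed identity survives
   because (E_(N+1)(V) E_(N+1)(-V))' is a multiple of V^N, which has order >= N. *)

Lemma sum_ord_widen_vanish (V : nmodType) (k N : nat) (F : nat -> V) :
  (k < N)%N -> (forall j, (k < j)%N -> F j = 0) ->
  \sum_(j < k.+1) F j = \sum_(j < N) F j.
Proof.
move=> kN F0; rewrite (big_ord_widen _ _ kN) big_mkcond /=.
by apply: eq_bigr => j _; case: ltnP => // /F0.
Qed.

Definition weight_poly (A : nzRingType) (n : nat) (u : 'I_n -> A) : {poly A} :=
  \sum_(i < n) (u i)%:P * 'X^(i.+1).

Lemma coef_weight_poly_exp (A : comNzRingType) n (u : 'I_n -> A) j k :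
  (k < j)%N -> ((weight_poly u) ^+ j)`_k = 0.
Proof.
have -> : weight_poly u = 'X * \sum_(i < n) (u i)%:P * 'X^i.
  by rewrite mulr_sumr; apply: eq_bigr => i _; rewrite exprS mulrCA.
by rewrite exprMn coefXnM => ->.
Qed.

Lemma weight_polyN (A : comNzRingType) n (u : 'I_n -> A) :
  weight_poly (fun i => - u i) = - weight_poly u.
Proof. by rewrite -sumrN; apply: eq_bigr => i _; rewrite polyCN mulNr. Qed.

Section Exponential.
Variable R : numFieldType.

Definition invfact (j : nat) : R := (j`!%:R)^-1.

Lemma invfactS (j : nat) : invfact j.+1 * j.+1%:R = invfact j.
Proof. by rewrite /invfact factS natrM invfM mulrAC mulVf ?mul1r ?pnatr_eq0. Qed.

Definition expt (N : nat) (V : {poly R}) : {poly R} := \sum_(j < N) invfact j *: V ^+ j.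

Lemma exptS N V : expt N.+1 V = expt N V + invfact N *: V ^+ N.
Proof. by rewrite /expt big_ord_recr. Qed.

Lemma deriv_expt N V : (expt N.+1 V)^`() = V^`() * expt N V.
Proof.
rewrite /expt raddf_sum /= big_ord_recl /= derivZ expr0 derivC scaler0 add0r.
rewrite mulr_sumr; apply: eq_bigr => j _.
rewrite derivZ deriv_exp -scalerMnr -scaler_nat scalerA scalerAr.
by rewrite [_ * invfact _]mulrC invfactS.
Qed.

Lemma coef_expt_mul_exptN N (V : {poly R}) c :
  (forall j i, (i < j)%N -> (V ^+ j)`_i = 0) ->
  (0 < c <= N)%N -> (expt N.+1 V * expt N.+1 (- V))`_c = 0.
Proof.
move=> V_order /andP[c_gt0 cN].
set P := expt N.+1 V * expt N.+1 (- V).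
have dP : P^`() = V ^+ N * (V^`() * (invfact N)%:P * ((-1) ^+ N * expt N V - expt N (- V))).
  rewrite /P derivM !deriv_expt derivN !exptS -!mul_polyC [(- V) ^+ N]exprNn.
  ring.
have dP_low k : (k < N)%N -> P^`()`_k = 0.
  move=> kN; rewrite dP coefM big1 // => j _.
  by rewrite V_order ?mul0r //; move: (ltn_ord j) kN; clear; lia.
have c1N : (c.-1 < N)%N by rewrite prednK.
have /eqP := dP_low _ c1N; rewrite coef_deriv prednK //.
by rewrite mulrn_eq0 => /orP[/eqP c0|/eqP]; first by rewrite c0 in c_gt0.
Qed.

End Exponential.

Lemma horner_schurP (R : numFieldType) n k (v : 'I_n -> {poly R}) x :
  (schurP k v).[x] =
  \sum_(j < k.+1) invfact R j * ((weight_poly (fun i => (v i).[x])) ^+ j)`_k.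
Proof.
rewrite /schurP horner_sum; apply: eq_bigr => j _; rewrite hornerZ.
have -> : weight_poly (fun i => (v i).[x]) = map_poly (horner_eval x) (weight_poly v).
  rewrite /weight_poly rmorph_sum; apply: eq_bigr => i _.
  by rewrite rmorphM /= map_polyC rmorphXn /= map_polyX.
by rewrite -rmorphXn coef_map.
Qed.

Lemma weight_poly_hornerC (R : numFieldType) n (w : 'I_n -> R) y :
  weight_poly (fun i => (w i)%:P.[y]) = weight_poly w.
Proof. by apply: eq_bigr => i _; rewrite hornerC. Qed.

Lemma schur_coef_expt (R : numFieldType) n k N (u : 'I_n -> R) :
  (k < N)%N -> schur k u = (expt N (weight_poly u))`_k.
Proof.
move=> kN; rewrite /schur horner_schurP weight_poly_hornerC.
rewrite (sum_ord_widen_vanish (F := fun j => invfact R j * ((weight_poly u) ^+ j)`_k) kN).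
  by rewrite /expt coef_sum; apply: eq_bigr => j _; rewrite coefZ.
by move=> j kj; rewrite coef_weight_poly_exp ?mulr0.
Qed.

Lemma schur_convolutionN (R : numFieldType) n (u : 'I_n -> R) c : (0 < c)%N ->
  \sum_(b < c.+1) schur b u * schur (c - b) (fun i => - u i) = 0.
Proof.
move=> c_gt0.
transitivity ((expt c.+1 (weight_poly u) * expt c.+1 (- weight_poly u))`_c).
  rewrite coefM; apply: eq_bigr => b _.
  by rewrite !(@schur_coef_expt _ _ _ c.+1) ?weight_polyN // ltnS leq_subr.
by apply: coef_expt_mul_exptN; [exact: coef_weight_poly_exp | rewrite c_gt0 /=].
Qed.

(* Derivative in the coefficient ring of {poly {poly R}}: in schurP, the outer variable
   is z and the inner one is the coordinate of u that is being differentiated. *)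
Section CoefDerivative.
Variable R : numFieldType.

Definition cderiv (P : {poly {poly R}}) : {poly {poly R}} := map_poly (@deriv R) P.

Lemma coef_cderiv P k : (cderiv P)`_k = (P`_k)^`().
Proof. by rewrite /cderiv coef_map. Qed.

Lemma cderivM P Q : cderiv (P * Q) = cderiv P * Q + P * cderiv Q.
Proof.
apply/polyP => k; rewrite coefD coef_cderiv !coefM raddf_sum -big_split /=.
by apply: eq_bigr => i _; rewrite derivM !coef_cderiv.
Qed.

Lemma cderiv1 : cderiv 1 = 0.
Proof. by rewrite /cderiv -polyC1 map_polyC /= derivC. Qed.

Lemma cderivXn P j : cderiv (P ^+ j.+1) = P ^+ j * cderiv P *+ j.+1.
Proof.
elim: j => [|j IHj]; first by rewrite expr1 expr0 mul1r.
rewrite exprS cderivM IHj exprS mulrnAr -mulrnAl [RHS]mulrS mulrC.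
by rewrite mulrnAl mulrA.
Qed.

Variables (n : nat) (u : 'I_n -> {poly R}) (i : 'I_n).
Hypothesis deriv_u : forall l, (u l)^`() = (l == i)%:R.

Lemma cderiv_weight_poly : cderiv (weight_poly u) = 'X^(i.+1).
Proof.
apply/polyP => k; rewrite coef_cderiv coefXn /weight_poly coef_sum raddf_sum /=.
rewrite (bigD1 i) //= big1 ?addr0 => [|l /negbTE il].
  by rewrite coefCM coefXn; case: (k == i.+1); rewrite ?mulr1 ?mulr0 ?deriv_u ?eqxx ?raddf0.
by rewrite coefCM coefXn; case: (k == l.+1); rewrite ?mulr1 ?mulr0 ?deriv_u ?il ?raddf0.
Qed.

Lemma deriv_schurP k :
  (schurP k u)^`() = if (i < k)%N then schurP (k - i.+1) u else 0.
Proof.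
rewrite [X in X^`()]/schurP raddf_sum /= big_ord_recl /= derivZ -coef_cderiv.
rewrite expr0 cderiv1 coef0 scaler0 add0r.
under eq_bigr => j _ do rewrite derivZ -coef_cderiv cderivXn cderiv_weight_poly coefMn coefMXn.
case: ifP => ik; last by apply: big1 => j _; rewrite ltnNge ik mul0rn scaler0.
have ki : (k - i.+1 < k)%N by move: ik; clear; lia.
pose F j := invfact R j *: ((weight_poly u) ^+ j)`_(k - i.+1).
rewrite /schurP (sum_ord_widen_vanish (F := F) ki) => [|j kj]; last first.
  by rewrite /F coef_weight_poly_exp ?scaler0.
apply: eq_bigr => j _; rewrite /F ltnNge ik /= -scalerMnr -scaler_nat scalerA.
by rewrite mulrC invfactS.
Qed.

End CoefDerivative.

Lemma deriv_varpoly (R : numFieldType) n (u : 'I_n -> R) i l :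
  (varpoly u i l)^`() = (l == i)%:R.
Proof. by rewrite /varpoly; case: (l == i); rewrite ?derivX ?derivC. Qed.

Lemma horner_schurP_varpoly (R : numFieldType) n (u : 'I_n -> R) i k :
  (schurP k (varpoly u i)).[u i] = schur k u.
Proof.
rewrite /schur !horner_schurP weight_poly_hornerC.
suff -> : weight_poly (fun l => (varpoly u i l).[u i]) = weight_poly u by [].
by apply: eq_bigr => l _; rewrite /varpoly; case: eqP => [->|_]; rewrite ?hornerX ?hornerC.
Qed.

Lemma derivn_schurP_varpoly0 (R : numFieldType) n (u : 'I_n -> R) i r k :
  nat_of_ord i = 0%N ->
  (schurP k (varpoly u i))^`(r) = if (r <= k)%N then schurP (k - r) (varpoly u i) else 0.
Proof.
move=> i0; elim: r k => [|r IHr] k; first by rewrite derivn0 subn0.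
rewrite derivSn (deriv_schurP (deriv_varpoly u i)) i0.
by case: k => [|k] /=; rewrite ?raddf0 // IHr subn1.
Qed.

Lemma schurZ_subn (R : numFieldType) n k r (u : 'I_n -> R) :
  schurZ (k%:Z - r%:Z) u = if (r <= k)%N then schur (k - r) u else 0.
Proof.
case: ifP => [rk|/negbT kr]; first by rewrite subzn.
have : k%:Z - r%:Z < 0 by rewrite subr_lt0 ltz_nat ltnNge.
by case: (k%:Z - r%:Z).
Qed.

Definition Hdiag (R : numFieldType) n m (t : 'I_m.+1 -> R) (u : 'I_n -> R) (d : nat) : R :=
  \sum_(k < m.+1) t k * schurZ (k%:Z - d%:Z) u.

Lemma Hmx_entry (R : numFieldType) n m (t : 'I_m.+1 -> R) (u : 'I_n -> R) i j :
  Hmx t u i j = if (i <= j)%N then Hdiag t u (j - i) else 0.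
Proof.
rewrite /Hmx summxE; case: ifP => ij; last by apply: big1 => k _; rewrite !mxE ij mulr0.
apply: eq_bigr => k _; rewrite !mxE ij; congr (_ * schurZ _ _).
by rewrite -subzn //; ring.
Qed.

Lemma horner_derivn_h_in (R : numFieldType) n m (t : 'I_m.+1 -> R) (u : 'I_n -> R) i r :
  nat_of_ord i = 0%N -> (h_in t u i)^`(r).[u i] = Hdiag t u r.
Proof.
move=> i0; rewrite /h_in raddf_sum horner_sum; apply: eq_bigr => k _.
rewrite /= derivnZ hornerZ derivn_schurP_varpoly0 // schurZ_subn.
by case: ifP; rewrite ?horner_schurP_varpoly ?horner0.
Qed.

Lemma horner_deriv_Phi_in (R : numFieldType) n m (t : 'I_m.+1 -> R) (u : 'I_n -> R) i :
  (Phi_in t u i)^`().[u i] = Hdiag t u i.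
Proof.
rewrite /Phi_in raddf_sum horner_sum; apply: eq_bigr => k _.
rewrite /= derivZ hornerZ (deriv_schurP (deriv_varpoly u i)) schurZ_subn ltnS.
by case: ifP; rewrite ?horner_schurP_varpoly ?subSS ?horner0.
Qed.

Lemma Hdiag_elem (R : numFieldType) n m (u : 'I_n -> R) d :
  (n <= m)%N -> (d < n)%N ->
  Hdiag (fun k : 'I_m.+1 => if (k <= n)%N then (-1) ^+ k * elem (n - k) u else 0) u d = 0.
Proof.
move=> nm dn.
pose F k : R := if (d <= k <= n)%N
  then (-1) ^+ n * (schur (n - k) (fun i => - u i) * schur (k - d) u) else 0.
transitivity (\sum_(k < n.+1) F k).
  rewrite /Hdiag (@sum_ord_widen_vanish _ n m.+1 F) ?ltnS //; last first.
    by move=> k nk; rewrite /F; case: ifP => //; move: nk; clear; lia.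
  apply: eq_bigr => k _; rewrite /F schurZ_subn /elem.
  case: (leqP k n) => kn; case: (leqP d k) => dk /=; rewrite ?mul0r ?mulr0 //.
  by rewrite mulrA -exprD subnKC // mulrA.
rewrite -(big_mkord xpredT F) (@big_cat_nat _ _ _ d) //=; last exact: leqW (ltnW dn).
rewrite big_nat_cond big1 ?add0r => [|k /andP[/andP[_ kd] _]]; last by rewrite /F leqNgt kd.
rewrite -{1}(add0n d) big_addn subSn ?(ltnW dn) // big_mkord.
transitivity ((-1) ^+ n * \sum_(b < (n - d).+1) schur b u * schur (n - d - b) (fun i => - u i));
  last by rewrite schur_convolutionN ?mulr0 ?subn_gt0.
rewrite mulr_sumr; apply: eq_bigr => b _.
have bnd := ltn_ord b.
rewrite /F ifT; last by move: bnd dn; clear; lia.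
have -> : (n - (b + d) = n - d - b)%N by move: bnd dn; clear; lia.
by rewrite addnK [schur b u * _]mulrC.
Qed.

Theorem mainTheorem5 (R : numFieldType) (n m : nat) (hn : (0 < n)%N) (hnm : (n <= m)%N) :
  (forall (t : 'I_m.+1 -> R) (u : 'I_n -> R),
     (forall i j : 'I_n, (j < i)%N -> Hmx t u i j = 0) /\
     (forall i j : 'I_n, (i <= j)%N ->
        Hmx t u i j = (h_in t u (Ordinal hn))^`((j - i)%N).[u (Ordinal hn)]) /\
     ((forall i : 'I_n, (Phi_in t u i)^`().[u i] = 0) <-> Hmx t u = 0)) /\
  (forall u : 'I_n -> R,
     Hmx (fun k : 'I_m.+1 => if (k <= n)%N then (-1) ^+ k * elem (n - k) u else 0) u = 0).
Proof.
split=> [t u|u]; last first.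
  apply/matrixP => i j; rewrite Hmx_entry mxE; case: ifP => // _.
  by apply: Hdiag_elem => //; move: (ltn_ord j); clear; lia.
split; [|split].
- by move=> i j ji; rewrite Hmx_entry leqNgt ji.
- by move=> i j ij; rewrite Hmx_entry ij horner_derivn_h_in.
split=> [crit|/matrixP H0 i].
- apply/matrixP => i j; rewrite Hmx_entry mxE; case: ifP => // _.
  have jin : (j - i < n)%N by move: (ltn_ord j); clear; lia.
  by rewrite -(horner_deriv_Phi_in t u (Ordinal jin)) crit.
- by rewrite horner_deriv_Phi_in; have := H0 (Ordinal hn) i; rewrite Hmx_entry mxE /= subn0.
Qed.
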